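(* Let $\mathsf{P}$ be a program of $\mathcal{H}$. If $\mathsf{P}$ is stratified, then its ground instantiation $\mathsf{Gr(P)}$ is locally stratified.
   Context: Types of $\mathcal{H}$: base types $\iota,o$; predicate types $\pi::=o\mid\rho\to\pi$; argument types $\rho::=\iota\mid\pi$. Terms are built from predicate/individual variables and constants and function symbols (types $\iota^n\to\iota$) by typed application; atoms are terms of type $o$; literals are atoms, equalities $(\mathsf{E}_1\approx\mathsf{E}_2)$ of terms of type $\iota$, and negated atoms $\sim\mathsf{E}$. A clause is $\mathsf{p}\,\mathsf{V}_1\cdots\mathsf{V}_n\leftarrow\mathsf{L}_1,\dots,\mathsf{L}_m$ with $\mathsf{p}$ a predicate constant of type $\rho_1\to\cdots\to\rho_n\to o$, distinct variables $\mathsf{V}_i:\rho_i$, literals $\mathsf{L}_j$; a program is a finite set of clauses. Stratified: predicate type $\pi$ is greater than $\pi'$ if $\pi=\rho_1\to\cdots\to\rho_n\to\pi'$, $n\ge1$. $\mathsf{P}$ is stratified if its predicate constants can be partitioned into finitely many sets $S_1,\dots,S_r$ ($\mathit{stratum}(\mathsf{r})=i$ iff $\mathsf{r}\in S_i$) such that for every clause $\mathsf{H}\leftarrow\mathsf{A}_1,\dots,\mathsf{A}_m,\sim\mathsf{B}_1,\dots,\sim\mathsf{B}_n$ with head predicate constant $\mathsf{p}$: if $\mathsf{A}_i$ starts with predicate constant $\mathsf{q}$ then $\mathit{stratum}(\mathsf{q})\le\mathit{stratum}(\mathsf{p})$; if $\mathsf{A}_i$ starts with predicate variable $\mathsf{Q}$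 then $\mathit{stratum}(\mathsf{q})\le\mathit{stratum}(\mathsf{p})$ for all predicate constants $\mathsf{q}$ of $\mathsf{P}$ of type greater than or equal to that of $\mathsf{Q}$; if $\mathsf{B}_i$ starts with predicate constant $\mathsf{q}$ then $\mathit{stratum}(\mathsf{q})<\mathit{stratum}(\mathsf{p})$; if $\mathsf{B}_i$ starts with predicate variable $\mathsf{Q}$ then $\mathit{stratum}(\mathsf{q})<\mathit{stratum}(\mathsf{p})$ for all predicate constants $\mathsf{q}$ of $\mathsf{P}$ of type greater than or equal to that of $\mathsf{Q}$. Ground instantiation: $U_{\mathsf{P},\rho}$ is the set of ground terms of type $\rho$ built from symbols of $\mathsf{P}$; $\mathsf{Gr(P)}$ is the set of all clauses obtained from clauses of $\mathsf{P}$ by substituting for every variable an element of $U_{\mathsf{P},\rho}$ of its type; it is a propositional program with Herbrand base $U_{\mathsf{P},o}$ (the ground atoms), ground equalities being constants. Local stratification: a propositional program with Herbrand base $B$ is locally stratified if $B$ can be partitioned into sets $S_1,S_2,\dots,S_\alpha,\dots$, $\alpha<\gamma$ for a countable ordinal $\gamma$, such that for every clause $\mathsf{H}\leftarrow\mathsf{A}_1,\dots,\mathsf{A}_m,\sim\mathsf{B}_1,\dots,\sim\mathsf{B}_n$, $\mathit{stratum}(\mathsf{A}_i)\le\mathit{stratum}(\mathsf{H})$ for all $i\le m$ and $\mathit{stratum}(\mathsf{B}_i)<\mathit{stratum}(\mathsf{H})$ for all $i\le n$, where $\mathit{stratum}(\mathsf{C})=\beta$ if $\mathsf{C}\in S_\beta$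 and $\mathit{stratum}(\mathsf{C})=0$ if $\mathsf{C}$ is a constant (a ground equality). *)

From Stdlib Require Import List Bool Arith.
Import ListNotations.

(* TI = iota, TO = o, TA r p = r -> p *)
Inductive ty : Type := TI | TO | TA (r p : ty).

Definition ty_eq_dec (a b : ty) : {a = b} + {a <> b}.
Proof. decide equality. Defined.

(* predicate types  pi ::= o | rho -> pi ;  argument types rho ::= iota | pi *)
Fixpoint is_pred (t : ty) : bool :=
  match t with
  | TO => true
  | TI => false
  | TA r p => (match r with TI => true | _ => is_pred r end) && is_pred p
  end.

Definition is_arg (t : ty) : bool :=
  match t with TI => true | _ => is_pred t end.

Definition arrows (rs : list ty) (t : ty) : ty := fold_right TA t rs.

Definition fun_ty (n : nat) : ty := arrows (repeat TI n) TI.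

Definition ty_ge (a b : ty) : Prop := exists rs, a = arrows rs b.

(* Var x t : variable named x of (argument) type t;
   Con c t : predicate constant named c of (predicate) type t;
   Fn f n  : function symbol f of type iota^n -> iota
             (individual constants are Fn f 0);
   App e1 e2 : typed application. *)
Inductive term : Type :=
| Var (x : nat) (t : ty)
| Con (c : nat) (t : ty)
| Fn (f : nat) (n : nat)
| App (e1 e2 : term).

Fixpoint typeof (e : term) : option ty :=
  match e with
  | Var _ t => if is_arg t then Some t else None
  | Con _ t => if is_pred t then Some t else None
  | Fn _ n => Some (fun_ty n)
  | App e1 e2 =>
      match typeof e1, typeof e2 with
      | Some (TA a b), Some a' => if ty_eq_dec a a' then Some b else None
      | _, _ => None
      end
  end.

Fixpoint head_sym (e : term) : term :=
  match e with App e1 _ => head_sym e1 | _ => e end.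

Fixpoint con_occurs (c : nat) (t : ty) (e : term) : Prop :=
  match e with
  | Con c' t' => c' = c /\ t' = t
  | App e1 e2 => con_occurs c t e1 \/ con_occurs c t e2
  | _ => False
  end.

Fixpoint fn_occurs (f n : nat) (e : term) : Prop :=
  match e with
  | Fn f' n' => f' = f /\ n' = n
  | App e1 e2 => fn_occurs f n e1 \/ fn_occurs f n e2
  | _ => False
  end.

Fixpoint var_occurs (x : nat) (t : ty) (e : term) : Prop :=
  match e with
  | Var x' t' => x' = x /\ t' = t
  | App e1 e2 => var_occurs x t e1 \/ var_occurs x t e2
  | _ => False
  end.

Inductive literal : Type :=
| LAtom (e : term)
| LEq (e1 e2 : term)
| LNeg (e : term).

Definition lit_terms (L : literal) : list term :=
  match L with LAtom e => [e] | LEq e1 e2 => [e1; e2] | LNeg e => [e] end.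

Definition wf_literal (L : literal) : Prop :=
  match L with
  | LAtom e => typeof e = Some TO
  | LEq e1 e2 => typeof e1 = Some TI /\ typeof e2 = Some TI
  | LNeg e => typeof e = Some TO
  end.

(* clause  p V_1 ... V_n <- L_1, ..., L_m *)
Record clause : Type := mkClause {
  hd_con : nat;
  hd_ty : ty;
  hd_vars : list (nat * ty);
  body : list literal
}.

Definition head_term (C : clause) : term :=
  fold_left (fun acc v => App acc (Var (fst v) (snd v))) (hd_vars C)
            (Con (hd_con C) (hd_ty C)).

Definition wf_clause (C : clause) : Prop :=
  is_pred (hd_ty C) = true /\
  hd_ty C = arrows (map snd (hd_vars C)) TO /\
  (forall v, In v (hd_vars C) -> is_arg (snd v) = true) /\
  NoDup (hd_vars C) /\
  (forall L, In L (body C) -> wf_literal L).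

Definition program := list clause.

Definition wf_program (P : program) : Prop := forall C, In C P -> wf_clause C.

Definition clause_terms (C : clause) : list term :=
  head_term C :: flat_map lit_terms (body C).

Definition con_of_prog (P : program) (c : nat) (t : ty) : Prop :=
  exists C, In C P /\ exists e, In e (clause_terms C) /\ con_occurs c t e.

Definition fn_of_prog (P : program) (f n : nat) : Prop :=
  exists C, In C P /\ exists e, In e (clause_terms C) /\ fn_occurs f n e.

(* constraint imposed by a body atom A (positive: rel = le, negative: rel = lt)
   on the head predicate constant p : tp *)
Definition strat_cond (P : program) (st : nat -> ty -> nat)
  (rel : nat -> nat -> Prop) (p : nat) (tp : ty) (A : term) : Prop :=
  match head_sym A with
  | Con q tq => rel (st q tq) (st p tp)
  | Var _ tQ => forall q tq, con_of_prog P q tq -> ty_ge tq tQ ->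
                 rel (st q tq) (st p tp)
  | _ => True
  end.

(* a stratum assignment of the (finitely many) predicate constants of P;
   its image on them is finite, i.e. a partition into finitely many sets *)
Definition stratified (P : program) : Prop :=
  exists st : nat -> ty -> nat,
    forall C, In C P -> forall L, In L (body C) ->
      match L with
      | LAtom A => strat_cond P st le (hd_con C) (hd_ty C) A
      | LNeg B => strat_cond P st lt (hd_con C) (hd_ty C) B
      | LEq _ _ => True
      end.

Fixpoint built_from (P : program) (e : term) : Prop :=
  match e with
  | Var _ _ => False
  | Con c t => con_of_prog P c t
  | Fn f n => fn_of_prog P f n
  | App e1 e2 => built_from P e1 /\ built_from P e2
  end.

Definition U (P : program) (rho : ty) (e : term) : Prop :=
  typeof e = Some rho /\ built_from P e.

Fixpoint subst (s : nat -> ty -> term) (e : term) : term :=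
  match e with
  | Var x t => s x t
  | App e1 e2 => App (subst s e1) (subst s e2)
  | _ => e
  end.

Definition subst_lit (s : nat -> ty -> term) (L : literal) : literal :=
  match L with
  | LAtom e => LAtom (subst s e)
  | LEq e1 e2 => LEq (subst s e1) (subst s e2)
  | LNeg e => LNeg (subst s e)
  end.

Definition gclause := (term * list literal)%type.

Definition var_of_clause (C : clause) (x : nat) (t : ty) : Prop :=
  exists e, In e (clause_terms C) /\ var_occurs x t e.

Definition Gr (P : program) (G : gclause) : Prop :=
  exists C s, In C P /\
    (forall x t, var_of_clause C x t -> U P t (s x t)) /\
    G = (subst s (head_term C), map (subst_lit s) (body C)).

Definition herbrand_base (P : program) : term -> Prop := U P TO.

(* the strata S_alpha, alpha < gamma (gamma a countable ordinal), are modelled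
   by a stratum function into a countable well-ordered set (T, lt). *)
Definition countable_well_order (T : Type) (lt : T -> T -> Prop) : Prop :=
  (forall x y z, lt x y -> lt y z -> lt x z) /\
  (forall x y, lt x y \/ x = y \/ lt y x) /\
  well_founded lt /\
  (exists f : T -> nat, forall x y, f x = f y -> x = y).

Definition locally_stratified (B : term -> Prop) (GP : gclause -> Prop) : Prop :=
  exists (T : Type) (lt : T -> T -> Prop), countable_well_order T lt /\
  exists stratum : term -> T,   (* its restriction to B is the partition of B *)
    forall H bd, GP (H, bd) -> forall L, In L bd ->
      match L with
      | LAtom A => lt (stratum A) (stratum H) \/ stratum A = stratum H
      | LNeg A => lt (stratum A) (stratum H)
      | LEq _ _ => True  (* stratum of a ground equality is 0 <= stratum H *)
      end.

(* Give every ground atom the stratum 1 + st(q), where q is the predicate constant at its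
   head, and stratum 0 to ground atoms headed by anything else.  A body atom headed by a
   constant keeps its head under grounding.  A body atom headed by a variable Q : tQ is
   grounded by a term of type tQ built from symbols of P, so its new head is a constant q
   of P whose type is greater than or equal to tQ, and the stratification of P bounds
   st(q) exactly as local stratification demands. *)
From Stdlib Require Import List Arith Lia.
Import ListNotations.

Lemma head_sym_subst (s : nat -> ty -> term) (e : term) :
  head_sym (subst s e) =
  match head_sym e with Var x t => head_sym (s x t) | h => h end.
Proof. induction e; simpl; auto. Qed.

Lemma head_sym_fold_app_vars (vs : list (nat * ty)) (e : term) :
  head_sym (fold_left (fun acc v => App acc (Var (fst v) (snd v))) vs e) = head_sym e.
Proof. revert e; induction vs as [|v vs IH]; intros e; simpl; [reflexivity | now rewrite IH]. Qed.

Lemma head_sym_head_term (C : clause) :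
  head_sym (head_term C) = Con (hd_con C) (hd_ty C).
Proof. apply head_sym_fold_app_vars. Qed.

Lemma var_occurs_head_sym (e : term) (x : nat) (t : ty) :
  head_sym e = Var x t -> var_occurs x t e.
Proof. induction e; simpl; intros H; try discriminate; auto. now inversion H. Qed.

Lemma ty_ge_head_con (e : term) (t tq : ty) (q : nat) :
  typeof e = Some t -> head_sym e = Con q tq -> ty_ge tq t.
Proof.
  revert t; induction e as [x tx|c tc|f n|e1 IH1 e2 _]; intros t Ht Hh; simpl in *; try discriminate.
  - inversion Hh; subst. destruct (is_pred tq); inversion Ht; subst.
    now exists [].
  - destruct (typeof e1) as [[| |a b]|] eqn:E1; try discriminate.
    destruct (typeof e2) as [a'|]; try discriminate.
    destruct (ty_eq_dec a a'); try discriminate. inversion Ht; subst.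
    destruct (IH1 _ eq_refl Hh) as [rs Hrs].
    exists (rs ++ [a']). unfold arrows in *. now rewrite fold_right_app.
Qed.

Lemma con_of_prog_head_con (P : program) (e : term) (q : nat) (tq : ty) :
  built_from P e -> head_sym e = Con q tq -> con_of_prog P q tq.
Proof.
  induction e; simpl; intros B H; try discriminate.
  - now inversion H; subst.
  - now apply IHe1.
Qed.

Lemma var_of_clause_body (C : clause) (L : literal) (A : term) (x : nat) (t : ty) :
  In L (body C) -> In A (lit_terms L) -> var_occurs x t A -> var_of_clause C x t.
Proof.
  intros HL HA Hx. exists A. split; [right; apply in_flat_map; eauto | exact Hx].
Qed.

Lemma strat_cond_subst (P : program) (st : nat -> ty -> nat) (rel : nat -> nat -> Prop)
    (p : nat) (tp : ty) (s : nat -> ty -> term) (A : term) :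
  (forall x t, var_occurs x t A -> U P t (s x t)) ->
  strat_cond P st rel p tp A ->
  match head_sym (subst s A) with Con q tq => rel (st q tq) (st p tp) | _ => True end.
Proof.
  intros ground_vars. unfold strat_cond. rewrite head_sym_subst.
  destruct (head_sym A) as [x tQ| | |] eqn:HA; auto.
  intros Hvar. destruct (ground_vars x tQ (var_occurs_head_sym _ _ _ HA)) as [Hty Hbuilt].
  destruct (head_sym (s x tQ)) as [|q tq| |] eqn:Hs; auto.
  apply Hvar.
  - exact (con_of_prog_head_con _ _ _ _ Hbuilt Hs).
  - exact (ty_ge_head_con _ _ _ _ Hty Hs).
Qed.

Definition atom_stratum (st : nat -> ty -> nat) (e : term) : nat :=
  match head_sym e with Con q tq => S (st q tq) | _ => 0 end.

Lemma atom_stratum_head_term (st : nat -> ty -> nat) (s : nat -> ty -> term) (C : clause) :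
  atom_stratum st (subst s (head_term C)) = S (st (hd_con C) (hd_ty C)).
Proof. unfold atom_stratum. now rewrite head_sym_subst, head_sym_head_term. Qed.

Lemma atom_stratum_subst_le (P : program) (st : nat -> ty -> nat) (s : nat -> ty -> term)
    (C : clause) (A : term) :
  (forall x t, var_occurs x t A -> U P t (s x t)) ->
  strat_cond P st le (hd_con C) (hd_ty C) A ->
  atom_stratum st (subst s A) <= atom_stratum st (subst s (head_term C)).
Proof.
  intros Hs Hc. rewrite atom_stratum_head_term. unfold atom_stratum.
  pose proof (strat_cond_subst P st _ _ _ s A Hs Hc) as H.
  destruct (head_sym (subst s A)); lia.
Qed.

Lemma atom_stratum_subst_lt (P : program) (st : nat -> ty -> nat) (s : nat -> ty -> term)
    (C : clause) (A : term) :
  (forall x t, var_occurs x t A -> U P t (s x t)) ->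
  strat_cond P st lt (hd_con C) (hd_ty C) A ->
  atom_stratum st (subst s A) < atom_stratum st (subst s (head_term C)).
Proof.
  intros Hs Hc. rewrite atom_stratum_head_term. unfold atom_stratum.
  pose proof (strat_cond_subst P st _ _ _ s A Hs Hc) as H.
  destruct (head_sym (subst s A)); lia.
Qed.

Lemma countable_well_order_nat : countable_well_order nat lt.
Proof.
  split; [|split; [|split]].
  - intros; lia.
  - intros x y; lia.
  - exact lt_wf.
  - now exists (fun n => n).
Qed.

Theorem lemma2 (P : program) :
  wf_program P -> stratified P -> locally_stratified (herbrand_base P) (Gr P).
Proof.
  intros _ [st Hst].
  exists nat, lt. split; [exact countable_well_order_nat |].
  exists (atom_stratum st).
  intros H bd [C [s [HC [Hs Heq]]]] L HL.
  inversion Heq; subst H bd; clear Heq.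
  apply in_map_iff in HL as [L0 [<- HL0]].
  specialize (Hst C HC L0 HL0).
  assert (Hground : forall A, In A (lit_terms L0) ->
            forall x t, var_occurs x t A -> U P t (s x t)).
  { intros A HA x t Hx. exact (Hs x t (var_of_clause_body C L0 A x t HL0 HA Hx)). }
  destruct L0 as [A| |A]; simpl; auto.
  - apply Nat.lt_eq_cases, (atom_stratum_subst_le P); [apply Hground; now left | exact Hst].
  - apply (atom_stratum_subst_lt P); [apply Hground; now left | exact Hst].
Qed.
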